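(* Let $\{B^i\}_{i=1}^N$ and $\{\tilde B^i\}_{i=1}^N$ be tuples of complex $n\times n$ matrices such that $\sum_iB^iB^{i\dagger}=\sum_i\tilde B^i\tilde B^{i\dagger}=1_n$ and such that for some $l\in\mathbb N$ each of the four sets $\{B^{i_1}\cdots B^{i_l}:\sum_k|i_k|\equiv0\}$, $\{B^{i_1}\cdots B^{i_l}:\sum_k|i_k|\equiv1\}$, $\{\tilde B^{i_1}\cdots\tilde B^{i_l}:\sum_k|i_k|\equiv0\}$, $\{\tilde B^{i_1}\cdots\tilde B^{i_l}:\sum_k|i_k|\equiv1\}$ (congruences mod 2) spans $\mathrm M_n(\mathbb C)$. Suppose that either (a) for every $L\in\mathbb N$ there is $\alpha_L\in\mathbb R$ with $\mathrm{tr}[B^{i_1}\cdots B^{i_L}]=e^{i\alpha_L}\mathrm{tr}[\tilde B^{i_1}\cdots\tilde B^{i_L}]$ for all $(i_1,\dots,i_L)$ with $\sum_k|i_k|$ even, or (b) for every $L\in\mathbb N$ there is $\alpha_L\in\mathbb R$ with the same equality for all $(i_1,\dots,i_L)$ with $\sum_k|i_k|$ odd. Then there exist $e^{i\beta}\in\mathrm U(1)$, $v\in\mathrm U(n)$ and $\eta\in\{\pm1\}$ such that $\tilde B^i=e^{i\beta}\eta^{|i|}v^\dagger B^iv$ for all $i$. Moreover $e^{i\beta}$ and $\eta$ are unique, and $v$ is unique up to a $\mathrm U(1)$ phase.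
   Context: $N,n\ge1$ are integers and $i\mapsto|i|\in\{0,1\}$ is a fixed parity function on $\{1,\dots,N\}$. (Conditions (a) and (b) are exactly the statements that the fMPSs $\{\sigma_x^{|i|}\otimes B^i\}$ and $\{\sigma_x^{|i|}\otimes\tilde B^i\}$ are gauge equivalent in anti-periodic, resp. periodic, boundary conditions.) *)

From HB Require Import structures.
From mathcomp Require Import all_boot all_order all_algebra.
From mathcomp Require Import spectral sesquilinear.
From mathcomp Require Import complex.
From mathcomp Require Import reals.
Set Implicit Arguments. Unset Strict Implicit. Unset Printing Implicit Defensive.
Import Order.TTheory GRing.Theory Num.Theory.
Local Open Scope ring_scope.

Definition wprod (K : nzRingType) (N n : nat) (B : 'I_N -> 'M[K]_n) (w : seq 'I_N)
  : 'M[K]_n := foldr (fun i M => B i *m M) 1%:M w.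

(* total parity sum_k |i_k| mod 2 of a word, the parity function being p *)
Definition wparity (N : nat) (p : 'I_N -> bool) (w : seq 'I_N) : bool := odd (count p w).

Definition spans_parity (K : fieldType) (N n : nat) (p : 'I_N -> bool)
  (B : 'I_N -> 'M[K]_n) (l : nat) (b : bool) : Prop :=
  (<< [seq wprod B (val w) | w in [pred w : l.-tuple 'I_N | wparity p (val w) == b]] >>%VS
     = fullv).

Local Open Scope sesquilinear_scope.

Definition gauge_rel (R : realType) (N n : nat) (p : 'I_N -> bool)
  (B Bt : 'I_N -> 'M[R[i]]_n) (c eta : R[i]) (v : 'M[R[i]]_n) : Prop :=
  [/\ `|c| = 1, (eta = 1 \/ eta = -1), v \is unitarymx &
      forall i, Bt i = (c * eta ^+ p i) *: (v ^t* *m B i *m v)].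

Definition trace_phase_eq (R : realType) (N n : nat) (p : 'I_N -> bool)
  (B Bt : 'I_N -> 'M[R[i]]_n) (b : bool) : Prop :=
  forall L : nat, exists c : R[i], `|c| = 1 /\
    forall w : seq 'I_N, size w = L -> wparity p w = b ->
      \tr (wprod B w) = c * \tr (wprod Bt w).

From HB Require Import structures.
From mathcomp Require Import all_boot all_order all_algebra.
From mathcomp Require Import spectral sesquilinear complex reals.
Import Order.TTheory GRing.Theory Num.Theory.
Local Open Scope ring_scope.
Local Open Scope sesquilinear_scope.
Set Implicit Arguments. Unset Strict Implicit. Unset Printing Implicit Defensive.

(* For L >= l the words of length L of either parity span M_n.  Pairing them through the trace
   with words of length L, the trace condition at length 2L shows that the linear map F_(L,b)
   sending each B-word of length L and parity b to the same Bt-word is well defined, and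
   F_(L+M,b+b')(XY) = F_(L,b)(X) F_(M,b')(Y).  Comparing F_(l,b), F_(2l,0) and F_(l+1,b), which
   differ by central, hence scalar, factors, a rescaling of F_(l,0) is a unital algebra
   endomorphism of M_n, i.e. X |-> S X S^-1 by Skolem-Noether, F_(l,1) = eta F_(l,0) with
   eta^2 = 1, and Bt^i = mu eta^|i| S B^i S^-1.  Both normalisations make P = S^-1 S^-* a fixed
   point of |mu|^2 sum_i B^i (.) B^i*; in an eigenbasis of P the largest eigenvalue defines a block
   left invariant by every word, so irreducibility forces |mu| = 1 and P scalar: S can be taken
   unitary.  For uniqueness, two gauges agree up to the phase c^l on the spanning even words, so
   v' v^* is central, and one nonzero letter of each parity determines c and eta. *)

Section LinearSpan.
Variable K : fieldType.

Lemma linear_fun0 (U W : lmodType K) (f : U -> W) : linear f -> f 0 = 0.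
Proof.
by move=> lf; have := lf 1 0 0; rewrite !scale1r addr0 => e; apply: (addrI (f 0)); rewrite addr0 -e.
Qed.

Lemma linear_sumZ (U W : lmodType K) (f : U -> W) : linear f ->
  forall m (a : 'I_m -> K) (x : 'I_m -> U), f (\sum_i a i *: x i) = \sum_i a i *: f (x i).
Proof.
move=> lf m a x; pose fL : {linear U -> W} := HB.pack f (GRing.isLinear.Build K U W *:%R f lf).
by rewrite -[f]/(fL : U -> W) linear_sum; under eq_bigr do rewrite linearZ.
Qed.

Lemma linear_span_eq (vT : vectType K) (W : lmodType K) (s : seq vT) (f g : vT -> W) :
  linear f -> linear g -> {in s, f =1 g} -> {in <<s>>%VS, f =1 g}.
Proof.
move=> lf lg fg v; rewrite -[s]/(val (in_tuple s)) => /coord_span ->.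
by rewrite !linear_sumZ //; apply: eq_bigr => i _; rewrite fg ?mem_nth.
Qed.

Lemma linear_span_sub (vT wT : vectType K) (s : seq vT) (h : vT -> wT) (V : {vspace wT}) :
  linear h -> {in s, forall x, h x \in V} -> {in <<s>>%VS, forall y, h y \in V}.
Proof.
move=> lh hs y; rewrite -[s]/(val (in_tuple s)) => /coord_span ->.
by rewrite linear_sumZ //; apply: rpred_sum => i _; rewrite rpredZ ?hs ?mem_nth.
Qed.

End LinearSpan.

Section MatrixUnits.
Variables (K : fieldType) (n : nat).
Implicit Types (X Z : 'M[K]_n).

Lemma scalar_mx1_neq0 : (0 < n)%N -> (1%:M : 'M[K]_n) != 0.
Proof. by case: n => // n' _; apply: oner_neq0. Qed.

Lemma mulmx_delta_entry X (a b i j : 'I_n) :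
  (X *m delta_mx a b) i j = X i a * (b == j)%:R.
Proof.
rewrite !mxE (bigD1 a) //= big1 ?addr0; first by rewrite mxE eqxx /= eq_sym.
by move=> k /negbTE kna; rewrite !mxE kna mulr0.
Qed.

Lemma delta_mulmx_entry X (a b i j : 'I_n) :
  (delta_mx a b *m X) i j = (i == a)%:R * X b j.
Proof.
rewrite !mxE (bigD1 b) //= big1 ?addr0; first by rewrite mxE eqxx andbT.
by move=> k /negbTE knb; rewrite !mxE knb andbF mul0r.
Qed.

Lemma mxtrace_mul_delta Z (i j : 'I_n) : \tr (Z *m delta_mx j i) = Z i j.
Proof.
rewrite /mxtrace (bigD1 i) //= big1 ?addr0; first by rewrite mulmx_delta_entry eqxx mulr1.
by move=> k /negbTE kni; rewrite mulmx_delta_entry eq_sym kni mulr0.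
Qed.

Lemma mulmx_delta_col X (j a : 'I_n) :
  X *m delta_mx j a = \sum_k X k j *: delta_mx k a.
Proof.
apply/matrixP => r c; rewrite mulmx_delta_entry summxE (bigD1 r) //= big1 ?addr0.
  by rewrite !mxE eqxx /= eq_sym.
by move=> k; rewrite eq_sym => /negbTE nk; rewrite !mxE nk mulr0.
Qed.

Lemma delta_mulmx_row X (j a : 'I_n) :
  delta_mx a j *m X = \sum_k X j k *: delta_mx a k.
Proof.
apply/matrixP => r c; rewrite delta_mulmx_entry summxE (bigD1 c) //= big1 ?addr0.
  by rewrite !mxE eqxx andbT mulrC.
by move=> k; rewrite eq_sym => /negbTE nk; rewrite !mxE nk andbF mulr0.
Qed.

Lemma delta_mulmx_delta X (i0 a b i1 : 'I_n) :
  delta_mx i0 a *m X *m delta_mx b i1 = X a b *: delta_mx i0 i1.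
Proof.
apply/matrixP => r c; rewrite mulmx_delta_entry delta_mulmx_entry !mxE [c == i1]eq_sym.
by case: (r == i0); case: (i1 == c); rewrite /= ?mulr0 ?mul0r ?mulr1 ?mul1r.
Qed.

Lemma mxtrace_form_eq0 Z (s : seq 'M[K]_n) :
  <<s>>%VS = fullv -> {in s, forall Y, \tr (Z *m Y) = 0} -> Z = 0.
Proof.
move=> s_full Zs; apply/matrixP => i j; rewrite mxE -mxtrace_mul_delta.
have lin0 : linear (fun _ : 'M[K]_n => 0 : K^o) by move=> a x y; rewrite scaler0 addr0.
have linZ : linear (fun Y => \tr (Z *m Y) : K^o).
  by move=> a x y; rewrite mulmxDr -scalemxAr mxtraceD mxtraceZ.
by apply: (linear_span_eq linZ lin0 Zs); rewrite s_full memvf.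
Qed.

Lemma central_mx_scalar Z : (forall X, Z *m X = X *m Z) -> exists a, Z = a%:M.
Proof.
move=> Zc; have [n0|n_gt0] := posnP n.
  by exists 0; apply/matrixP => i; move: (ltn_ord i); rewrite {2}n0.
pose i0 := Ordinal n_gt0; exists (Z i0 i0); apply/matrixP => i j; rewrite mxE.
have /matrixP/(_ i j) := Zc (delta_mx j j).
rewrite mulmx_delta_entry delta_mulmx_entry eqxx mulr1.
have [<- _|nij] := eqVneq i j; last by rewrite mul0r mulr0n.
have /matrixP/(_ i i0) := Zc (delta_mx i i0).
by rewrite mulmx_delta_entry delta_mulmx_entry !eqxx mulr1 mul1r mulr1n.
Qed.

End MatrixUnits.

Lemma scalar_mx_inj (K : fieldType) n : (0 < n)%N -> injective (@scalar_mx K n).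
Proof. by move=> n_gt0 a b /matrixP/(_ (Ordinal n_gt0) (Ordinal n_gt0)); rewrite !mxE eqxx. Qed.

Lemma mul_factor_scale (K : fieldType) n (E F G : 'M[K]_n -> 'M[K]_n) :
  (forall Y, exists X, G X = Y) ->
  (forall X Y, E (X *m Y) = F X *m G Y) -> (forall X Y, E (Y *m X) = G Y *m F X) ->
  exists a, F 1%:M = a%:M /\ forall Y, E Y = a *: G Y.
Proof.
move=> G_surj EFG EGF.
have [a F1] : exists a, F 1%:M = a%:M.
  apply: central_mx_scalar => Y; have [X <-] := G_surj Y.
  by rewrite -EFG -EGF (mul1mx X) (mulmx1 X).
by exists a; split=> // Y; rewrite -{1}[Y]mul1mx EFG F1 mul_scalar_mx.
Qed.

(** * Skolem-Noether for matrix algebras *)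

Section SkolemNoether.
Variables (K : fieldType) (n : nat) (th : 'M[K]_n -> 'M[K]_n).
Hypotheses (th_linear : linear th) (th_mul : {morph th : X Y / X *m Y}).

Local Notation E := (@delta_mx K n n).

Definition sn_intertwiner (i0 b : 'I_n) := \sum_j th (E j i0) *m E b j.

Lemma sn_intertwinerP i0 b X :
  th X *m sn_intertwiner i0 b = sn_intertwiner i0 b *m X.
Proof.
rewrite /sn_intertwiner mulmx_sumr mulmx_suml.
under eq_bigr do rewrite mulmxA -th_mul (mulmx_delta_col X) (linear_sumZ th_linear) mulmx_suml.
rewrite exchange_big /=; apply: eq_bigr => k _.
rewrite -mulmxA delta_mulmx_row !mulmx_sumr; apply: eq_bigr => j _.
by rewrite -scalemxAr -scalemxAl.
Qed.

Lemma sn_intertwiner_unit i0 a b :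
  th (E i0 i0) a b != 0 -> sn_intertwiner i0 b \in unitmx.
Proof.
move=> w_neq0; pose T := \sum_j E j a *m th (E i0 j).
suff TS : T *m sn_intertwiner i0 b = (th (E i0 i0) a b)%:M.
  have : ((th (E i0 i0) a b)^-1 *: T) *m sn_intertwiner i0 b = 1%:M.
    by rewrite -scalemxAl TS scale_scalar_mx mulVf.
  by case/mulmx1_unit.
rewrite /T mulmx_suml (eq_bigr (fun j => th (E i0 i0) a b *: E j j)) => [|j _].
  by rewrite -scaler_sumr -mx1_sum_delta scalemx1.
rewrite mulmx_sumr (bigD1 j) //= big1 ?addr0 => [|k nkj].
  by rewrite mulmxA -(mulmxA (E j a)) -th_mul mul_delta_mx delta_mulmx_delta.
rewrite mulmxA -(mulmxA (E j a)) -th_mul mul_delta_mx_0 1?eq_sym //.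
by rewrite linear_fun0 // mulmx0 !mul0mx.
Qed.

Lemma skolem_noether : th 1%:M != 0 ->
  exists2 S, S \in unitmx & forall X, th X = S *m X *m invmx S.
Proof.
move=> th1_neq0.
have [i0 Ei0_neq0] : exists i0, th (E i0 i0) != 0.
  have [n0|n_gt0] := posnP n.
    by case/eqP: th1_neq0; apply/matrixP => i; move: (ltn_ord i); rewrite {2}n0.
  pose i0 := Ordinal n_gt0; exists i0; apply: contra th1_neq0 => /eqP E0.
  rewrite mx1_sum_delta; under eq_bigr do rewrite -[delta_mx _ _]scale1r.
  rewrite (linear_sumZ th_linear) big1 // => j _.
  have -> : E j j = E j i0 *m E i0 i0 *m E i0 j by rewrite !mul_delta_mx.
  by rewrite !th_mul E0 mulmx0 mul0mx scaler0.
have [[a b] /= w_neq0] : exists ab : 'I_n * 'I_n, th (E i0 i0) ab.1 ab.2 != 0.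
  apply/existsP; apply: contraR Ei0_neq0; rewrite negb_exists => /forallP E0.
  by apply/eqP/matrixP => r c; have := E0 (r, c); rewrite negbK mxE => /eqP.
exists (sn_intertwiner i0 b); first exact: sn_intertwiner_unit w_neq0.
by move=> X; rewrite -sn_intertwinerP mulmxK // (sn_intertwiner_unit w_neq0).
Qed.

End SkolemNoether.

Section Words.
Variables (K : fieldType) (N n : nat) (p : 'I_N -> bool).
Implicit Types (B Bt Bd : 'I_N -> 'M[K]_n) (w : seq 'I_N).

Definition words B L b :=
  [seq wprod B (val t) | t in [pred t : L.-tuple 'I_N | wparity p (val t) == b]].

Lemma span_words B L b : spans_parity p B L b -> <<words B L b>>%VS = fullv.
Proof. by []. Qed.

Lemma mem_span_words B L b X : spans_parity p B L b -> X \in <<words B L b>>%VS.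
Proof. by move=> sB; rewrite span_words ?memvf. Qed.

Lemma size_words B Bt L b : size (words B L b) = size (words Bt L b).
Proof. by rewrite /words !size_image. Qed.

Lemma wprod_cat B w1 w2 : wprod B (w1 ++ w2) = wprod B w1 *m wprod B w2.
Proof. by elim: w1 => [|i w IH] /=; rewrite ?mul1mx // IH mulmxA. Qed.

Lemma wparity_cons (i : 'I_N) w : wparity p (i :: w) = p i (+) wparity p w.
Proof. by rewrite /wparity /= oddD oddb. Qed.

Lemma wparity_cat w1 w2 : wparity p (w1 ++ w2) = wparity p w1 (+) wparity p w2.
Proof. by rewrite /wparity count_cat oddD. Qed.

Lemma wprod_eq0 B w (i : 'I_N) : i \in w -> B i = 0 -> wprod B w = 0.
Proof.
elim: w => [|j w IH] //=; rewrite inE => /orP[/eqP <- -> | iw Bi0].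
  by rewrite mul0mx.
by rewrite IH // mulmx0.
Qed.

Lemma mem_words B L b (t : L.-tuple 'I_N) :
  wparity p t = b -> wprod B t \in words B L b.
Proof. by move=> tb; apply: (image_f (fun t : L.-tuple 'I_N => wprod B t)); apply/eqP. Qed.

Lemma wordsP B L b x :
  reflect (exists2 t : L.-tuple 'I_N, wparity p t = b & x = wprod B t) (x \in words B L b).
Proof.
apply: (iffP imageP) => [[t /eqP tb ->]|[t tb ->]]; first by exists t.
by exists t; rewrite // inE tb.
Qed.

Lemma nth_words B Bt L b k : (k < size (words B L b))%N ->
  exists2 t : L.-tuple 'I_N, wparity p t = b &
    (words B L b)`_k = wprod B t /\ (words Bt L b)`_k = wprod Bt t.
Proof.
rewrite /words size_image => lt_k; pose t := enum_val (Ordinal lt_k).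
exists t; first by have /eqP := enum_valP (Ordinal lt_k).
by rewrite !(nth_image _ _ (Ordinal lt_k)).
Qed.

Lemma spans_parity_wprod B L b :
  spans_parity p B L b -> exists ws, <<[seq wprod B w | w <- ws]>>%VS = fullv.
Proof.
move=> sB; exists (map val (enum [pred t : L.-tuple 'I_N | wparity p t == b])).
by rewrite -map_comp.
Qed.

Lemma spans_parity_succ Bd B L b : \sum_i B i *m Bd i = 1%:M ->
  spans_parity p B L false -> spans_parity p B L true -> spans_parity p B L.+1 b.
Proof.
move=> B_Bd s0 s1; apply/vspaceP => X; rewrite memvf.
rewrite -[X]mul1mx -B_Bd mulmx_suml; apply: rpred_sum => i _; rewrite -mulmxA.
apply: (linear_span_sub (s := words B L (p i (+) b)) (h := mulmx (B i))).
- by move=> a x y; rewrite mulmxDr scalemxAr.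
- move=> _ /wordsP[t tb ->]; apply: memv_span.
  by rewrite -[_ *m _]/(wprod B (cons_tuple i t)) mem_words //= wparity_cons tb addKb.
- by apply: mem_span_words; case: (p i (+) b).
Qed.

Lemma spans_parity_ge Bd B l : \sum_i B i *m Bd i = 1%:M ->
  spans_parity p B l false -> spans_parity p B l true ->
  forall L b, (l <= L)%N -> spans_parity p B L b.
Proof.
move=> B_Bd s0 s1 L b /subnKC <-; elim: (L - l)%N b => [|k IH] b.
  by rewrite addn0; case: b.
by rewrite addnS; apply: (spans_parity_succ _ B_Bd).
Qed.

(* Otherwise every nonzero word of length [l] has parity [~~ b && odd l], so the words of the
   other parity, all zero, cannot span. *)
Lemma exists_letter_of_parity B l b : (0 < n)%N ->
  spans_parity p B l false -> spans_parity p B l true -> exists2 i, p i = b & B i != 0.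
Proof.
move=> n_gt0 s0 s1.
have [/existsP[i /andP[/eqP pib Bi]]|] := boolP [exists i, (p i == b) && (B i != 0)].
  by exists i.
rewrite negb_exists => /forallP vanish; exfalso.
pose c := ~~ (~~ b && odd l).
have words0 : {in words B l c, forall x, x = 0}.
  move=> _ /wordsP[t tc ->].
  have [/hasP[i it /eqP pib]|no_b] := boolP (has (fun i => p i == b) t).
    by apply: (wprod_eq0 it); apply/eqP; move: (vanish i); rewrite pib eqxx negbK.
  have count_t : count p t = if b then 0%N else l.
    rewrite (eq_in_count (a2 := fun _ => ~~ b)) => [|i it].
      by case: (b); rewrite ?count_pred0 ?count_predT ?size_tuple.
    by move/hasPn/(_ i it): no_b; case: (p i); case: (b).
  by move: tc; rewrite /wparity count_t /c; case: (b) => //=; case: (odd l).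
have one0 : (1%:M : 'M[K]_n) = 0.
  have lin0 : linear (fun _ : 'M[K]_n => 0 : 'M[K]_n) by move=> a x y; rewrite scaler0 addr0.
  apply: (linear_span_eq (f := id) _ lin0 words0) => //.
  by apply: mem_span_words; case: (c).
by move/eqP: one0; apply/negP; apply: scalar_mx1_neq0.
Qed.

End Words.

Section WordBlocks.
Variables (K : fieldType) (N n : nat) (B : 'I_N -> 'M[K]_n).

Lemma wprod_conjmx (U V : 'M[K]_n) : U *m V = 1%:M -> V *m U = 1%:M ->
  forall w, wprod (fun i => U *m B i *m V) w = U *m wprod B w *m V.
Proof.
move=> UV VU; elim=> [|i w IH] /=; first by rewrite mulmx1.
by rewrite IH !mulmxA -[_ *m V *m U]mulmxA VU mulmx1.
Qed.

Lemma wprod_block_eq0 (J : pred 'I_n) :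
  (forall i j m, j \in J -> m \notin J -> B i j m = 0) ->
  forall w j m, j \in J -> m \notin J -> wprod B w j m = 0.
Proof.
move=> B_block; elim=> [|i w IH] j m jJ mJ /=.
  by rewrite mxE; case: eqP => // jm; rewrite -jm jJ in mJ.
rewrite mxE big1 // => k _; have [kJ|kJ] := boolP (k \in J).
  by rewrite IH ?mulr0.
by rewrite B_block ?mul0r.
Qed.

End WordBlocks.

Lemma spanning_words_no_block (K : fieldType) N n (B : 'I_N -> 'M[K]_n)
    (U V : 'M[K]_n) (ws : seq (seq 'I_N)) (J : pred 'I_n) :
  U *m V = 1%:M -> V *m U = 1%:M -> <<[seq wprod B w | w <- ws]>>%VS = fullv ->
  (forall i j m, j \in J -> m \notin J -> (U *m B i *m V) j m = 0) ->
  forall j m, j \in J -> m \in J.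
Proof.
move=> UV VU B_span B_block j m jJ; apply/negPn/negP => mJ.
have words_block w : (U *m wprod B w *m V) j m = 0.
  by rewrite -wprod_conjmx //; apply: (wprod_block_eq0 (J := J)).
have f0 : {in <<[seq wprod B w | w <- ws]>>%VS,
            (fun X => (U *m X *m V) j m : K^o) =1 (fun _ => 0)}.
  apply: linear_span_eq => [a x y|a x y|_ /mapP[w _ ->]] //.
    by rewrite mulmxDr mulmxDl -scalemxAr -scalemxAl mxE [X in X + _]mxE.
  by rewrite scaler0 addr0.
have := f0 (V *m delta_mx j m *m U); rewrite B_span memvf => /(_ isT).
by rewrite !mulmxA UV mul1mx -mulmxA UV mulmx1 mxE !eqxx => /eqP; rewrite oner_eq0.
Qed.


(** * Word maps and the similarity gauge *)

Section WordMaps.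
Variables (K : fieldType) (N n : nat) (p : 'I_N -> bool).
Implicit Types (B Bt : 'I_N -> 'M[K]_n) (w : seq 'I_N).

Local Notation words := (words p).

(* Sends the [k]-th [B]-word to the [k]-th [Bt]-word, extended linearly through the coordinates
   on the (possibly dependent) family of [B]-words; see [word_map_wprod]. *)
Definition word_map B Bt L b (X : 'M[K]_n) : 'M[K]_n :=
  \sum_(k < size (words B L b)) coord (in_tuple (words B L b)) k X *: (words Bt L b)`_k.

Lemma word_map_linear B Bt L b : linear (word_map B Bt L b).
Proof.
move=> a x y; rewrite /word_map scaler_sumr -big_split /=; apply: eq_bigr => k _.
by rewrite linearP /= scalerDl scalerA.
Qed.

Definition relations_transfer B Bt L b := forall a : 'I_(size (words B L b)) -> K,
  \sum_k a k *: (words B L b)`_k = 0 -> \sum_k a k *: (words Bt L b)`_k = 0.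

Lemma word_map_wprod B Bt L b (t : L.-tuple 'I_N) :
  spans_parity p B L b -> relations_transfer B Bt L b ->
  wparity p t = b -> word_map B Bt L b (wprod B t) = wprod Bt t.
Proof.
move=> sB transfer tb; have tA : t \in [pred t : L.-tuple 'I_N | wparity p t == b].
  exact/eqP.
have lt_k : (enum_rank_in tA t < size (words B L b))%N by rewrite /words size_image.
pose k : 'I_(size (words B L b)) := Ordinal lt_k.
have wordk B' : (words B' L b)`_k = wprod B' t.
  by rewrite /words (nth_image _ _ (enum_rank_in tA t)) enum_rankK_in.
have sum_delta (s : seq 'M[K]_n) : \sum_(j < size (words B L b)) (j == k)%:R *: s`_j = s`_k.
  by rewrite (bigD1 k) //= big1 ?addr0 ?eqxx ?scale1r // => j /negbTE ->; rewrite scale0r.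
have := transfer (fun j => coord (in_tuple (words B L b)) j (wprod B t) - (j == k)%:R).
under eq_bigr do rewrite scalerBl.
rewrite sumrB sum_delta wordk -(coord_span (X := in_tuple (words B L b))) ?subrr; last first.
  exact: mem_span_words.
move=> /(_ erefl); under eq_bigr do rewrite scalerBl.
by rewrite sumrB sum_delta wordk => /eqP; rewrite subr_eq0 => /eqP.
Qed.

(* Linear relations among [B]-words of parity [b] are detected by pairing them through the
   trace with [Bt]-words of parity [b (+) b'], and the trace condition carries them over. *)
Lemma relations_transfer_trace B Bt L b b' (c : K) : c != 0 ->
  spans_parity p Bt L (b (+) b') ->
  (forall w, size w = (L + L)%N -> wparity p w = b' ->
     \tr (wprod B w) = c * \tr (wprod Bt w)) ->
  relations_transfer B Bt L b.
Proof.
move=> c_neq0 sBt trace_eq a rel_B.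
apply: (mxtrace_form_eq0 (span_words sBt)) => _ /wordsP[u ub' ->].
have tr_word (k : 'I_(size (words B L b))) : \tr ((words Bt L b)`_k *m wprod Bt u) =
                 c^-1 * \tr ((words B L b)`_k *m wprod B u).
  have := ltn_ord k; move=> /(nth_words Bt) [t tb [-> ->]].
  rewrite -!wprod_cat trace_eq ?mulKf // ?size_cat ?size_tuple //.
  by rewrite wparity_cat tb ub' addKb.
rewrite mulmx_suml raddf_sum.
under eq_bigr do rewrite /= -scalemxAl mxtraceZ tr_word mulrCA.
rewrite -mulr_sumr; apply/eqP; rewrite mulf_eq0 invr_eq0 (negbTE c_neq0) /=.
apply/eqP; transitivity (\tr ((\sum_k a k *: (words B L b)`_k) *m wprod B u)).
  by rewrite mulmx_suml raddf_sum; apply: eq_bigr => k _; rewrite /= -scalemxAl mxtraceZ.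
by rewrite rel_B mul0mx mxtrace0.
Qed.

End WordMaps.

Section TraceGauge.
Variables (K : fieldType) (N n : nat) (p : 'I_N -> bool) (B Bt : 'I_N -> 'M[K]_n).
Variables (l : nat) (b' : bool).
Hypothesis n_gt0 : (0 < n)%N.
Hypothesis spansB : forall L b, (l <= L)%N -> spans_parity p B L b.
Hypothesis spansBt : forall L b, (l <= L)%N -> spans_parity p Bt L b.
Hypothesis trace_eq : forall L, exists2 c : K, c != 0 &
  forall w, size w = L -> wparity p w = b' -> \tr (wprod B w) = c * \tr (wprod Bt w).

Local Notation F := (word_map p B Bt).

Lemma word_map_wprod_ge L b (t : L.-tuple 'I_N) :
  (l <= L)%N -> wparity p t = b -> F L b (wprod B t) = wprod Bt t.
Proof.
move=> lL tb; apply: word_map_wprod tb; first exact: spansB.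
have [c c_neq0 tr_eq] := trace_eq (L + L).
by apply: (relations_transfer_trace c_neq0 _ tr_eq); apply: spansBt.
Qed.

Lemma word_map_mul L M b1 b2 X Y : (l <= L)%N -> (l <= M)%N ->
  F (L + M) (b1 (+) b2) (X *m Y) = F L b1 X *m F M b2 Y.
Proof.
move=> lL lM; have FLM_word (u : M.-tuple 'I_N) : wparity p u = b2 ->
    F (L + M) (b1 (+) b2) (X *m wprod B u) = F L b1 X *m wprod Bt u.
  move=> ub2; apply: (linear_span_eq (s := words p B L b1)
    (f := fun X => F (L + M) (b1 (+) b2) (X *m wprod B u))
    (g := fun X => F L b1 X *m wprod Bt u)).
  - by move=> a x y; rewrite /= mulmxDl -scalemxAl word_map_linear.
  - by move=> a x y; rewrite /= word_map_linear mulmxDl -scalemxAl.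
  - move=> _ /wordsP[t tb1 ->]; rewrite -wprod_cat -[t ++ u]/(val (cat_tuple t u)).
    have lLM : (l <= L + M)%N by rewrite (leq_trans lL) ?leq_addr.
    rewrite !word_map_wprod_ge ?wprod_cat //.
    by change (wparity p (t ++ u) = b1 (+) b2); rewrite wparity_cat tb1 ub2.
  - exact: mem_span_words (spansB _ lL).
apply: (linear_span_eq (s := words p B M b2) (f := fun Y => F (L + M) (b1 (+) b2) (X *m Y))
  (g := fun Y => F L b1 X *m F M b2 Y)).
- by move=> a x y; rewrite /= mulmxDr -scalemxAr word_map_linear.
- by move=> a x y; rewrite /= word_map_linear mulmxDr -scalemxAr.
- by move=> _ /wordsP[u ub2 ->]; rewrite FLM_word ?word_map_wprod_ge.
- exact: mem_span_words (spansB _ lM).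
Qed.

Lemma word_map_letter (i : 'I_N) L b X : (l <= L)%N ->
  F L.+1 (p i (+) b) (B i *m X) = Bt i *m F L b X.
Proof.
move=> lL; apply: (linear_span_eq (s := words p B L b) (f := fun X => F L.+1 (p i (+) b) (B i *m X))
  (g := fun X => Bt i *m F L b X)).
- by move=> a x y; rewrite /= mulmxDr -scalemxAr word_map_linear.
- by move=> a x y; rewrite /= word_map_linear mulmxDr -scalemxAr.
- move=> _ /wordsP[t tb ->]; rewrite -[B i *m _]/(wprod B (cons_tuple i t)).
  rewrite !word_map_wprod_ge ?leqW //.
  by change (wparity p (i :: t) = p i (+) b); rewrite wparity_cons tb.
- exact: mem_span_words (spansB _ lL).
Qed.

Lemma word_map_surj L b Y : (l <= L)%N -> exists X, F L b X = Y.
Proof.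
move=> lL; have Yspan := mem_span_words Y (spansBt b lL).
rewrite (coord_span (X := in_tuple (words p Bt L b)) Yspan).
exists (\sum_k coord (in_tuple (words p Bt L b)) k Y *: (words p B L b)`_k).
rewrite (linear_sumZ (word_map_linear p B Bt L b)); apply: eq_bigr => k _.
have : (k < size (words p B L b))%N by rewrite (size_words p B Bt) ltn_ord.
case/(nth_words Bt) => t tb [-> ->].
by rewrite word_map_wprod_ge.
Qed.

Lemma word_map_double b : exists a, [/\ a != 0, F l b 1%:M = a%:M &
  forall Y, F (l + l) false Y = a *: F l b Y].
Proof.
have FF X Y : F (l + l) false (X *m Y) = F l b X *m F l b Y.
  by rewrite -word_map_mul // addbb.
have [a [F1 Fll]] := mul_factor_scale (fun Y => word_map_surj b Y (leqnn l)) FF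
  (fun X Y => FF Y X).
exists a; split=> //; apply: contraTneq (@scalar_mx1_neq0 K n n_gt0) => a0.
have [X <-] := word_map_surj false 1%:M (leq_addr l l).
by rewrite Fll a0 scale0r eqxx.
Qed.

Lemma word_map_succ : exists z, forall b Y, F l.+1 b Y = z *: F l b Y.
Proof.
have [a0 [a0_neq0 F0_1 _]] := word_map_double false.
have step b : exists z, F l.+1 false 1%:M = z%:M /\ forall Y, a0 *: F l.+1 b Y = z *: F l b Y.
  have FsF X Y : F (l.+1 + l) b (X *m Y) = F l.+1 false X *m F l b Y.
    by rewrite -word_map_mul ?addFb.
  have FFs X Y : F (l.+1 + l) b (Y *m X) = F l b Y *m F l.+1 false X.
    by rewrite -word_map_mul ?addbF ?addSnnS.
  have [z [Fs1 Fz]] := mul_factor_scale (fun Y => word_map_surj b Y (leqnn l)) FsF FFs.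
  exists z; split=> // Y; rewrite -Fz -[in RHS](mulmx1 Y) -[b in RHS]addbF.
  by rewrite word_map_mul // F0_1 mul_mx_scalar.
have [z [Fs1 _]] := step false.
exists (z / a0) => b Y; have [z' [Fs1' Fz']] := step b.
have -> : z = z' by apply: (scalar_mx_inj n_gt0); rewrite -Fs1 -Fs1'.
by apply: (scalerI a0_neq0); rewrite Fz' scalerA mulrCA divff // mulr1.
Qed.

Lemma trace_gauge_similar : exists (S : 'M[K]_n) (mu eta : K),
  [/\ S \in unitmx, eta ^+ 2 = 1 & forall i, Bt i = (mu * eta ^+ p i) *: (S *m B i *m invmx S)].
Proof.
have [a0 [a0_neq0 F0_1 F0_double]] := word_map_double false.
have [a1 [a1_neq0 F1_1 F1_double]] := word_map_double true.
pose eta := a0 / a1.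
have F_parity b Y : F l b Y = eta ^+ b *: F l false Y.
  case: b; last by rewrite expr0 scale1r.
  by apply: (scalerI a1_neq0); rewrite -F1_double F0_double scalerA mulrCA divff // mulr1.
have eta2 : eta ^+ 2 = 1.
  have := F0_double 1%:M; rewrite F1_double F0_1 F1_1 !scale_scalar_mx.
  move=> /(scalar_mx_inj n_gt0) e.
  by rewrite expr_div_n !expr2 -e divff // mulf_neq0.
pose theta X := a0^-1 *: F l false X.
have theta_linear : linear theta.
  by move=> a x y; rewrite /theta word_map_linear scalerDr !scalerA mulrC.
have theta_mul : {morph theta : X Y / X *m Y}.
  move=> X Y; rewrite /theta -scalemxAl -scalemxAr scalerA -word_map_mul // addbb.
  by rewrite F0_double scalerA mulfVK.
have theta1 : theta 1%:M != 0.
  by rewrite /theta F0_1 scale_scalar_mx mulVf // scalar_mx1_neq0.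
have [S S_unit thetaE] := skolem_noether theta_linear theta_mul theta1.
have [z Fz] := word_map_succ.
exists S, z, eta; split=> // i; apply: (scalerI a0_neq0).
have := word_map_letter i false 1%:M (leqnn l); rewrite addbF mulmx1 F0_1 mul_mx_scalar => <-.
rewrite Fz F_parity -thetaE /theta !scalerA; congr (_ *: _).
by rewrite [RHS]mulrC mulKf.
Qed.

End TraceGauge.

(** * Unitarity of the gauge *)

Section StochasticFixedPoint.
Variables (R : numDomainType) (I : finType) (i0 : I).

Lemma exists_real_argmax (f : I -> R) : (forall j, f j \is Num.real) ->
  exists j, forall m, f m <= f j.
Proof.
move=> f_real; suff [j fj] : exists j, forall m, m \in enum I -> f m <= f j.
  by exists j => m; apply: fj; rewrite mem_enum.
elim: (enum I) => [|x s [j fj]]; first by exists i0.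
have [le_xj|lt_jx] := boolP (f x <= f j).
  by exists j => m; rewrite inE => /orP[/eqP -> | /fj].
have le_jx : f j <= f x.
  by move: (real_leVge (f_real x) (f_real j)); rewrite (negbTE lt_jx).
by exists x => m; rewrite inE => /orP[/eqP -> // | /fj/le_trans]; apply.
Qed.

Variables (T : I -> I -> R) (d : I -> R) (r : R).
Hypotheses (T_ge0 : forall j m, 0 <= T j m) (T_row : forall j, \sum_m T j m = 1).
Hypotheses (d_gt0 : forall j, 0 < d j) (r_ge0 : 0 <= r).
Hypothesis d_fixed : forall j, r * \sum_m T j m * d m = d j.

(* Comparing the fixed-point equation at a maximum and at a minimum of [d]. *)
Lemma stochastic_fixed_point_scale : r = 1.
Proof.
have d_real j : d j \is Num.real by rewrite gtr0_real.
have [jM dM] := exists_real_argmax d_real.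
have [jm dm] := exists_real_argmax (f := fun j => - d j) (fun j => etrans (rpredN _ _) (d_real j)).
have avg j c : \sum_m T j m * c = c by rewrite -mulr_suml T_row mul1r.
apply/le_anti/andP; split.
  rewrite -(ler_pM2r (d_gt0 jm)) mul1r -{2}(d_fixed jm) ler_wpM2l //.
  rewrite -{1}(avg jm (d jm)); apply: ler_sum => m _.
  by rewrite ler_wpM2l // -lerN2 dm.
rewrite -(ler_pM2r (d_gt0 jM)) mul1r -{1}(d_fixed jM) ler_wpM2l //.
by rewrite -(avg jM (d jM)); apply: ler_sum => m _; rewrite ler_wpM2l.
Qed.

Lemma stochastic_fixed_point_block : exists2 jM, (forall m, d m <= d jM) &
  forall j m, d j = d jM -> d m != d jM -> T j m = 0.
Proof.
have [jM dM] := exists_real_argmax (fun j => gtr0_real (d_gt0 j)).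
exists jM => // j m dj dm_neq.
have avg_gap : \sum_k T j k * (d jM - d k) = 0.
  under eq_bigr do rewrite mulrBr.
  rewrite sumrB -mulr_suml T_row mul1r -dj -{1}(d_fixed j).
  by rewrite stochastic_fixed_point_scale mul1r subrr.
have gap_ge0 k : true -> 0 <= T j k * (d jM - d k) by rewrite mulr_ge0 // subr_ge0.
move: (psumr_eq0P gap_ge0 avg_gap (i := m) isT) => /eqP.
by rewrite mulf_eq0 subr_eq0 [d jM == _]eq_sym (negbTE dm_neq) orbF => /eqP.
Qed.

End StochasticFixedPoint.

Section Adjoint.
Variable C : numClosedFieldType.

Lemma adjmxM m k q (A : 'M[C]_(m, k)) (B : 'M[C]_(k, q)) : (A *m B)^t* = B^t* *m A^t*.
Proof. by rewrite trmx_mul map_mxM. Qed.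

Lemma adjmxZ m k (a : C) (A : 'M[C]_(m, k)) : (a *: A)^t* = a^* *: A^t*.
Proof. by apply/matrixP => i j; rewrite !mxE rmorphM. Qed.

Lemma adjmx1 k : (1%:M : 'M[C]_k)^t* = 1%:M.
Proof. by rewrite trmx1 map_mx1. Qed.

Lemma unitarymx_adjK k (U : 'M[C]_k) : U \is unitarymx -> U^t* *m U = 1%:M.
Proof. by move=> U_unitary; rewrite -invmx_unitary // mulVmx // unitarymx_unit. Qed.

Lemma gram_entry m k (A : 'M[C]_(m, k)) j : (A *m A^t*) j j = \sum_q A j q * (A j q)^*.
Proof. by rewrite !mxE; apply: eq_bigr => q _; rewrite !mxE. Qed.

Lemma gram_diag_gt0 k (A : 'M[C]_k) j : A \in unitmx -> 0 < (A *m A^t*) j j.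
Proof.
move=> A_unit; rewrite gram_entry lt0r sumr_ge0 ?andbT => [|q _]; last exact: mul_conjC_ge0.
apply: contraTneq isT => /(psumr_eq0P (fun q _ => mul_conjC_ge0 (A j q))) row0.
have /matrixP/(_ j j) := mulmxV A_unit; rewrite !mxE eqxx big1 => [/eqP|q _].
  by rewrite eq_sym oner_eq0.
by have /eqP := row0 q isT; rewrite mul_conjC_eq0 => /eqP ->; rewrite mul0r.
Qed.

End Adjoint.

Section TransferFixedPoint.
Variables (C : numClosedFieldType) (N n : nat).
Implicit Types (B : 'I_N -> 'M[C]_n).

Lemma gram_diag_entry k (A : 'M[C]_k) (d : 'rV[C]_k) j :
  (A *m diag_mx d *m A^t*) j j = \sum_q A j q * d 0 q * (A j q)^*.
Proof. by rewrite !mxE; apply: eq_bigr => q _; rewrite mul_mx_diag !mxE. Qed.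

Lemma diag_transfer_fixed_point B (d : 'rV[C]_n) (r : C) : (0 < n)%N ->
  (forall j, 0 < d 0 j) -> 0 <= r -> \sum_i B i *m (B i)^t* = 1%:M ->
  r *: \sum_i B i *m diag_mx d *m (B i)^t* = diag_mx d ->
  r = 1 /\ exists2 jM, (forall m, d 0 m <= d 0 jM) &
    forall i j m, d 0 j = d 0 jM -> d 0 m != d 0 jM -> B i j m = 0.
Proof.
move=> n_gt0 d_gt0 r_ge0 B_norm fixed.
pose T j m := \sum_i B i j m * (B i j m)^*.
have T_ge0 j m : 0 <= T j m by apply: sumr_ge0 => i _; apply: mul_conjC_ge0.
have T_row j : \sum_m T j m = 1.
  have /matrixP/(_ j j) := B_norm; rewrite summxE mxE eqxx mulr1n => <-.
  by rewrite exchange_big; apply: eq_bigr => i _; rewrite gram_entry.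
have d_fixed j : r * \sum_m T j m * d 0 m = d 0 j.
  have /matrixP/(_ j j) := fixed; rewrite [RHS]mxE eqxx mulr1n mxE summxE => <-.
  congr (_ * _); under eq_bigr do rewrite mulr_suml.
  rewrite exchange_big; apply: eq_bigr => i _; rewrite gram_diag_entry.
  by apply: eq_bigr => m _; rewrite mulrAC.
pose i0 := Ordinal n_gt0; pose dd j := d 0 j.
split; first exact: (stochastic_fixed_point_scale (d := dd) i0 T_ge0 T_row d_gt0 r_ge0 d_fixed).
have [jM dM T0] := stochastic_fixed_point_block (d := dd) i0 T_ge0 T_row d_gt0 r_ge0 d_fixed.
exists jM => // i j m dj dm; apply/eqP; rewrite -mul_conjC_eq0; apply/eqP.
exact: (psumr_eq0P (fun i _ => mul_conjC_ge0 (B i j m)) (T0 j m dj dm) (i := i) isT).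
Qed.

End TransferFixedPoint.

Section UnitaryGauge.
Variables (C : numClosedFieldType) (N n : nat).
Implicit Types (B Bt : 'I_N -> 'M[C]_n).

(* In an eigenbasis of the Gram matrix [M M^*], the equation becomes a diagonal fixed point;
   its block structure would be inherited by all words, which is excluded when they span. *)
Lemma transfer_fixed_point_scalar B (M : 'M[C]_n) (r : C) (ws : seq (seq 'I_N)) :
  (0 < n)%N -> M \in unitmx -> 0 <= r -> \sum_i B i *m (B i)^t* = 1%:M ->
  r *: \sum_i B i *m (M *m M^t*) *m (B i)^t* = M *m M^t* ->
  <<[seq wprod B w | w <- ws]>>%VS = fullv ->
  r = 1 /\ exists2 c, 0 < c & M *m M^t* = c%:M.
Proof.
move=> n_gt0 M_unit r_ge0 B_norm fixed B_span.
pose U := spectralmx (M *m M^t*); pose d := spectral_diag (M *m M^t*).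
have U_unitary : U \is unitarymx := spectral_unitarymx _.
have UU' : U *m U^t* = 1%:M by apply/unitarymxP.
have U'U : U^t* *m U = 1%:M by apply: unitarymx_adjK.
have gramE : M *m M^t* = U^t* *m diag_mx d *m U.
  have /orthomx_spectralP : M *m M^t* \is normalmx.
    by apply/normalmxP; rewrite adjmxM trmxCK.
  by rewrite -/U -/d invmx_unitary.
have diagE : diag_mx d = (U *m M) *m (U *m M)^t*.
  by rewrite adjmxM mulmxA -(mulmxA U) gramE !mulmxA UU' mul1mx -mulmxA UU' mulmx1.
pose B' i := U *m B i *m U^t*.
have B'_norm : \sum_i B' i *m (B' i)^t* = 1%:M.
  transitivity (U *m (\sum_i B i *m (B i)^t*) *m U^t*); last by rewrite B_norm mulmx1 UU'.
  rewrite mulmx_sumr mulmx_suml; apply: eq_bigr => i _.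
  by rewrite !adjmxM trmxCK !mulmxA -(mulmxA _ (U^t*) U) U'U mulmx1.
have B'_fixed : r *: \sum_i B' i *m diag_mx d *m (B' i)^t* = diag_mx d.
  transitivity (U *m (r *: \sum_i B i *m (M *m M^t*) *m (B i)^t*) *m U^t*).
    rewrite -scalemxAr -scalemxAl; congr (_ *: _).
    rewrite mulmx_sumr mulmx_suml; apply: eq_bigr => i _.
    by rewrite gramE !adjmxM trmxCK !mulmxA.
  by rewrite fixed gramE !mulmxA UU' mul1mx -mulmxA UU' mulmx1.
have d_gt0 j : 0 < d 0 j.
  have UM_unit : U *m M \in unitmx by rewrite unitmx_mul unitarymx_unit.
  by have := gram_diag_gt0 j UM_unit; rewrite -diagE mxE eqxx mulr1n.
have [r1 [jM dM B'_block]] := diag_transfer_fixed_point n_gt0 d_gt0 r_ge0 B'_norm B'_fixed.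
have d_const m : d 0 m = d 0 jM.
  have no_block := spanning_words_no_block (J := [pred j | d 0 j == d 0 jM]) UU' U'U B_span.
  apply/eqP; apply: (no_block _ jM) => [i j k|]; last by rewrite inE.
  by rewrite !inE => /eqP dj dk; apply: B'_block.
have diag_const : diag_mx d = (d 0 jM)%:M.
  by apply/matrixP => j k; rewrite !mxE; case: eqP => _; rewrite ?d_const ?mulr0n.
split=> //; exists (d 0 jM) => //.
by rewrite gramE diag_const mul_mx_scalar -scalemxAl U'U scalemx1.
Qed.

Lemma scalar_gram_unitary (M : 'M[C]_n) (c : C) : M \in unitmx -> 0 < c ->
  M *m M^t* = c%:M -> exists2 v, v \is unitarymx & forall X, invmx M *m X *m M = v^t* *m X *m v.
Proof.
move=> M_unit c_gt0 gram; pose s := sqrtC c.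
have s_neq0 : s != 0 by rewrite gt_eqF // sqrtC_gt0.
have s_real : s^* = s by apply/CrealP; rewrite gtr0_real // sqrtC_gt0.
have s_inv2 : s^-1 * c * s^-1 = 1.
  by rewrite mulrAC -invfM -expr2 sqrtCK mulVf // gt_eqF.
have M'E : M^t* = c *: invmx M.
  by rewrite -[M^t*]mul1mx -(mulVmx M_unit) -mulmxA gram mul_mx_scalar.
have v'E : (s^-1 *: M)^t* = s^-1 *: M^t* by rewrite adjmxZ fmorphV /= s_real.
exists (s^-1 *: M) => [|X].
  apply/unitarymxP; rewrite v'E -scalemxAl -scalemxAr scalerA gram scale_scalar_mx.
  by rewrite mulrAC s_inv2.
by rewrite v'E M'E scalerA -!scalemxAl -scalemxAr scalerA s_inv2 scale1r.
Qed.

Lemma similar_gauge_unitary (p : 'I_N -> bool) B Bt (S : 'M[C]_n) (mu eta : C)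
    (ws : seq (seq 'I_N)) :
  (0 < n)%N -> S \in unitmx -> eta ^+ 2 = 1 ->
  (forall i, Bt i = (mu * eta ^+ p i) *: (S *m B i *m invmx S)) ->
  \sum_i B i *m (B i)^t* = 1%:M -> \sum_i Bt i *m (Bt i)^t* = 1%:M ->
  <<[seq wprod B w | w <- ws]>>%VS = fullv ->
  `|mu| = 1 /\
  exists2 v, v \is unitarymx & forall i, Bt i = (mu * eta ^+ p i) *: (v^t* *m B i *m v).
Proof.
move=> n_gt0 S_unit eta2 BtE B_norm Bt_norm B_span.
have eta_real : eta^* = eta.
  by move/eqP: eta2; rewrite sqrf_eq1 => /orP[] /eqP ->; rewrite ?rmorph1 ?rmorphN1.
have Bt_gram i : Bt i *m (Bt i)^t* =
    (mu * mu^*) *: (S *m (B i *m (invmx S *m (invmx S)^t*) *m (B i)^t*) *m S^t*).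
  rewrite BtE adjmxZ -scalemxAl -scalemxAr scalerA !adjmxM; congr (_ *: _).
    by rewrite rmorphM rmorphXn /= eta_real mulrACA -exprMn -expr2 eta2 expr1n mulr1.
  by rewrite !mulmxA.
have fixed : (mu * mu^*) *: \sum_i B i *m (invmx S *m (invmx S)^t*) *m (B i)^t* =
             invmx S *m (invmx S)^t*.
  have := congr1 (fun X => invmx S *m X *m (invmx S)^t*) Bt_norm.
  rewrite /= (eq_bigr _ (fun i _ => Bt_gram i)) -scaler_sumr -mulmx_suml -mulmx_sumr.
  rewrite -scalemxAr -scalemxAl !mulmxA mulVmx // mul1mx -(mulmxA _ (S^t*)) -adjmxM mulVmx //.
  by rewrite adjmx1 !mulmx1.
have M_unit : invmx S \in unitmx by rewrite unitmx_inv.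
have [r1 [c c_gt0 gram]] :=
  transfer_fixed_point_scalar n_gt0 M_unit (mul_conjC_ge0 mu) B_norm fixed B_span.
have [v v_unitary vE] := scalar_gram_unitary M_unit c_gt0 gram.
split; first by apply/eqP; rewrite -sqrp_eq1 ?normr_ge0 // normCK r1.
by exists v => // i; rewrite BtE -vE invmxK.
Qed.

End UnitaryGauge.

(** * Uniqueness of the gauge *)

Section Uniqueness.
Variables (C : numClosedFieldType) (N n : nat) (p : 'I_N -> bool).
Implicit Types (B Bt : 'I_N -> 'M[C]_n) (v : 'M[C]_n).

Lemma wprod_unitary_conj B Bt (kappa : 'I_N -> C) v : v \is unitarymx ->
  (forall i, Bt i = kappa i *: (v^t* *m B i *m v)) ->
  forall w, wprod Bt w = (\prod_(i <- w) kappa i) *: (v^t* *m wprod B w *m v).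
Proof.
move=> v_unitary BtE; elim=> [|i w IH] /=.
  by rewrite big_nil scale1r mulmx1 unitarymx_adjK.
rewrite big_cons BtE IH -scalemxAl -scalemxAr scalerA; congr (_ *: _).
by rewrite !mulmxA -[_ *m v *m v^t*]mulmxA (unitarymxP _) // mulmx1.
Qed.

Lemma prod_gauge_phase (c eta : C) w :
  \prod_(i <- w) (c * eta ^+ p i) = c ^+ size w * eta ^+ count p w.
Proof.
elim: w => [|i w IH]; first by rewrite big_nil mulr1.
by rewrite big_cons IH /= exprS exprD mulrACA.
Qed.

Lemma prod_gauge_even (c eta : C) w : eta ^+ 2 = 1 -> wparity p w = false ->
  \prod_(i <- w) (c * eta ^+ p i) = c ^+ size w.
Proof.
move=> eta2 w_even; rewrite prod_gauge_phase -(odd_double_half (count p w)).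
by move: w_even; rewrite /wparity => ->; rewrite add0n -muln2 mulnC exprM eta2 expr1n mulr1.
Qed.

Lemma unitary_conj_proportional v v' (a a' : C) : (0 < n)%N ->
  v \is unitarymx -> v' \is unitarymx -> a != 0 ->
  (forall X, a *: (v^t* *m X *m v) = a' *: (v'^t* *m X *m v')) ->
  exists2 lam, `|lam| = 1 & v' = lam *: v.
Proof.
move=> n_gt0 v_unitary v'_unitary a_neq0 conjE; pose u := v' *m v^t*.
have uX X : a *: (u *m X) = a' *: (X *m u).
  have := congr1 (fun Y => v' *m Y *m v^t*) (conjE X).
  rewrite /= -!scalemxAr -!scalemxAl !mulmxA (mulmxtVK _ v_unitary).
  by rewrite (unitarymxP v'_unitary) mul1mx.
have u_unitary : u *m u^t* = 1%:M.
  by rewrite /u adjmxM trmxCK !mulmxA (mulmxKtV _ v_unitary) // (unitarymxP v'_unitary).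
have u_neq0 : u != 0.
  by apply: contraTneq (scalar_mx1_neq0 C n_gt0) => u0; rewrite -u_unitary u0 mul0mx eqxx.
have aa' : a' = a.
  have := uX 1%:M; rewrite mulmx1 mul1mx => /eqP; rewrite eq_sym -subr_eq0 -scalerBl.
  by rewrite scaler_eq0 (negbTE u_neq0) orbF subr_eq0 => /eqP.
have [lam uE] : exists lam, u = lam%:M.
  by apply: central_mx_scalar => X; apply: (scalerI a_neq0); rewrite uX aa'.
have v'E : v' = lam *: v by rewrite -mul_scalar_mx -uE /u (mulmxKtV _ v_unitary).
exists lam => //; have := unitarymxP v'_unitary.
rewrite v'E adjmxZ -scalemxAl -scalemxAr scalerA (unitarymxP v_unitary) scale_scalar_mx mulr1.
by move/(scalar_mx_inj n_gt0) => lam2; apply/eqP; rewrite -sqrp_eq1 ?normr_ge0 // normCK lam2.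
Qed.

Lemma gauge_unique B Bt l (c eta c' eta' : C) v v' : (0 < n)%N ->
  spans_parity p B l false -> (forall b, exists2 i, p i = b & B i != 0) ->
  `|c| = 1 -> eta ^+ 2 = 1 -> v \is unitarymx ->
  (forall i, Bt i = (c * eta ^+ p i) *: (v^t* *m B i *m v)) ->
  eta' ^+ 2 = 1 -> v' \is unitarymx ->
  (forall i, Bt i = (c' * eta' ^+ p i) *: (v'^t* *m B i *m v')) ->
  [/\ c' = c, eta' = eta & exists2 lam : C, `|lam| = 1 & v' = lam *: v].
Proof.
move=> n_gt0 sB letters c1 eta2 v_unitary BtE eta'2 v'_unitary Bt'E.
have c_neq0 : c != 0 by rewrite -normr_eq0 c1 oner_eq0.
have conjE X : c ^+ l *: (v^t* *m X *m v) = c' ^+ l *: (v'^t* *m X *m v').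
  apply: (linear_span_eq (s := words p B l false) (f := fun X => c ^+ l *: (v^t* *m X *m v))
    (g := fun X => c' ^+ l *: (v'^t* *m X *m v'))) => [a x y|a x y|_ /wordsP[t t_even ->]|].
  - by rewrite mulmxDr mulmxDl -scalemxAr -scalemxAl scalerDr !scalerA mulrC.
  - by rewrite mulmxDr mulmxDl -scalemxAr -scalemxAl scalerDr !scalerA mulrC.
  - have -> : c ^+ l = \prod_(i <- t) (c * eta ^+ p i) by rewrite prod_gauge_even ?size_tuple.
    have -> : c' ^+ l = \prod_(i <- t) (c' * eta' ^+ p i) by rewrite prod_gauge_even ?size_tuple.
    by rewrite -(wprod_unitary_conj v_unitary BtE) -(wprod_unitary_conj v'_unitary Bt'E).
  - exact: mem_span_words.
have [lam lam1 v'E] :=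
  unitary_conj_proportional n_gt0 v_unitary v'_unitary (expf_neq0 l c_neq0) conjE.
have conj_v' X : v'^t* *m X *m v' = v^t* *m X *m v.
  by rewrite v'E adjmxZ -!scalemxAl -scalemxAr scalerA mulrC -normCK lam1 expr1n scale1r.
have phase_eq i : B i != 0 -> c' * eta' ^+ p i = c * eta ^+ p i.
  move=> Bi_neq0; have := BtE i; rewrite Bt'E conj_v' => /eqP.
  rewrite eq_sym -subr_eq0 -scalerBl scaler_eq0 subr_eq0 => /orP[/eqP //|/eqP conj0].
  have : B i = v *m (v^t* *m B i *m v) *m v^t*.
    by rewrite !mulmxA (unitarymxP v_unitary) mul1mx mulmxtVK.
  by rewrite conj0 mulmx0 mul0mx => Bi0; rewrite Bi0 eqxx in Bi_neq0.
have [i0 p0 B0] := letters false; have [i1 p1 B1] := letters true.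
have cc' : c' = c by have := phase_eq i0 B0; rewrite p0 !expr0 !mulr1.
split=> //; last by exists lam.
by have := phase_eq i1 B1; rewrite p1 !expr1 cc' => /(mulfI c_neq0).
Qed.

End Uniqueness.

Lemma sqr_eq1P (R : idomainType) (x : R) : x ^+ 2 = 1 <-> x = 1 \/ x = -1.
Proof.
split=> [/eqP|[] ->]; last by rewrite sqrrN expr1n.
  by rewrite sqrf_eq1 => /orP[]/eqP; [left | right].
by rewrite expr1n.
Qed.

Theorem mainTheorem3 (R : realType) (N n : nat) (p : 'I_N -> bool)
  (B Bt : 'I_N -> 'M[R[i]]_n) :
  (0 < N)%N -> (0 < n)%N ->
  \sum_(i < N) B i *m (B i) ^t* = 1%:M ->
  \sum_(i < N) Bt i *m (Bt i) ^t* = 1%:M ->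
  (exists l : nat, [/\ spans_parity p B l false, spans_parity p B l true,
                      spans_parity p Bt l false & spans_parity p Bt l true]) ->
  trace_phase_eq p B Bt false \/ trace_phase_eq p B Bt true ->
  exists (c eta : R[i]) (v : 'M[R[i]]_n),
    gauge_rel p B Bt c eta v /\
    forall (c' eta' : R[i]) (v' : 'M[R[i]]_n), gauge_rel p B Bt c' eta' v' ->
      [/\ c' = c, eta' = eta & exists2 lam : R[i], `|lam| = 1 & v' = lam *: v].
Proof.
move=> _ n_gt0 B_norm Bt_norm [l [sB0 sB1 sBt0 sBt1]] trace_phase.
have [b' tr_b'] : exists b', trace_phase_eq p B Bt b' by case: trace_phase; eexists.
have trace_eq L : exists2 c : R[i], c != 0 & forall w, size w = L -> wparity p w = b' ->
    \tr (wprod B w) = c * \tr (wprod Bt w).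
  by have [c [c1 tr_c]] := tr_b' L; exists c; rewrite // -normr_eq0 c1 oner_eq0.
have [S [mu [eta [S_unit eta2 BtE]]]] := trace_gauge_similar n_gt0
  (spans_parity_ge B_norm sB0 sB1) (spans_parity_ge Bt_norm sBt0 sBt1) trace_eq.
have [ws B_span] := spans_parity_wprod sB0.
have [mu1 [v v_unitary BtvE]] := similar_gauge_unitary n_gt0 S_unit eta2 BtE B_norm Bt_norm B_span.
exists mu, eta, v; split; first by split=> //; apply/sqr_eq1P.
move=> c' eta' v' [_ /sqr_eq1P eta'2 v'_unitary Bt'E].
exact: gauge_unique n_gt0 sB0 (fun b => exists_letter_of_parity b n_gt0 sB0 sB1)
  mu1 eta2 v_unitary BtvE eta'2 v'_unitary Bt'E.
Qed.
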